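(* Let $Q$ be a convex quadrilateral with vertices $0,1,z,w$ in counterclockwise order, and let $X\in(0,\infty)$. Then the equation $$-\frac{(1-u)(w-u)}{(0-u)(z-u)}=X$$ in the unknown $u\in\mathbb{C}$ has two solutions counted with multiplicity, and both lie in the interior of $Q$. *)

(* The complex plane is modelled by an arbitrary
   numClosedFieldType C (e.g. algC); the statement is purely algebraic. *)
From HB Require Import structures.
From mathcomp Require Import all_boot all_order all_algebra.
Set Implicit Arguments. Unset Strict Implicit. Unset Printing Implicit Defensive.
Import Order.TTheory GRing.Theory Num.Theory.
Local Open Scope ring_scope.

(* Strict left turn: c lies strictly to the left of the oriented line a -> b,
   i.e. cross(b - a, c - a) = Im(conj(b - a) * (c - a)) > 0. *)
Definition left_of (C : numClosedFieldType) (a b c : C) : bool :=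
  0 < 'Im ((b - a)^* * (c - a)).

Definition convex_ccw_quad (C : numClosedFieldType) (a b c d : C) : bool :=
  [&& left_of a b c, left_of b c d, left_of c d a & left_of d a b].

Definition in_quad_interior (C : numClosedFieldType) (a b c d u : C) : bool :=
  [&& left_of a b u, left_of b c u, left_of c d u & left_of d a u].

Definition cross_ratio_lhs (C : numClosedFieldType) (z w u : C) : C :=
  - ((1 - u) * (w - u)) / ((0 - u) * (z - u)).

(* Numerator polynomial of  lhs(u) - X, obtained by clearing the
   denominator (0-u)(z-u); solutions "counted with multiplicity" are its roots. *)
Definition quad_eq_poly (C : numClosedFieldType) (z w X : C) : {poly C} :=
  - ((1 - 'X) * (w%:P - 'X)) - X%:P * ((0 - 'X) * (z%:P - 'X)).

From HB Require Import structures.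
From mathcomp Require Import all_boot all_order all_algebra.
From mathcomp Require Import ring.
Set Implicit Arguments. Unset Strict Implicit. Unset Printing Implicit Defensive.
Import Order.TTheory GRing.Theory Num.Theory.
Local Open Scope ring_scope.

(* A root u of the equation avoids the vertices, and multiplying
   (u - 1)(u - w) = - X u (u - z) by the conjugate of u (u - z) shows that
   both products conj(u)(u - 1) * conj(u - z)(u - w) and
   conj(u - 1)(u - z) * conj(u - w) u are negative reals.  Hence the signed
   turns of u with respect to the opposite edges [0,1], [z,w] have the same
   sign, and likewise for [1,z], [w,0].  The four turns add up to twice the
   area of the quadrilateral, so they are not all nonpositive, and in a convex
   quadrilateral no point is weakly right of two opposite edges and weakly left
   of the other two.  Hence all four turns are positive. *)

Lemma nonneg_comb_le0 (R : numDomainType) (a b c x y z : R) :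
  0 <= a -> 0 <= b -> 0 <= c -> x <= 0 -> y <= 0 -> z <= 0 ->
  a * x + b * y + c * z <= 0.
Proof.
move=> a0 b0 c0 x0 y0 z0.
by rewrite -oppr_ge0 !opprD !addr_ge0 // -mulrN mulr_ge0 ?oppr_ge0.
Qed.

Section Turns.
Variable C : numClosedFieldType.
Implicit Types (p q r s u : C).

Definition turn p q u : C := 'Im ((q - p)^* * (u - p)).

Lemma left_ofE p q u : left_of p q u = (0 < turn p q u).
Proof. by []. Qed.

Lemma turn_real p q u : turn p q u \is Num.real.
Proof. exact: Creal_Im. Qed.

Lemma Im_conjM p q : 'Im (p^* * q) = 'Re p * 'Im q - 'Im p * 'Re q.
Proof. by rewrite ImM Re_conj Im_conj; ring. Qed.

Lemma turnE p q u :
  turn p q u = ('Re q - 'Re p) * ('Im u - 'Im p) - ('Im q - 'Im p) * ('Re u - 'Re p).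
Proof. by rewrite /turn Im_conjM !raddfB. Qed.

Lemma Im_conj_subM p q u : 'Im ((u - p)^* * (u - q)) = turn p q u.
Proof. by rewrite Im_conjM turnE !raddfB; ring. Qed.

Lemma left_of_neq p q u : left_of p q u -> p != q.
Proof.
by apply: contraTneq => ->; rewrite left_ofE /turn subrr conjC0 mul0r raddf0 ltxx.
Qed.

Lemma convex_ccw_quad_neq p0 p1 p2 p3 : convex_ccw_quad p0 p1 p2 p3 ->
  [/\ p0 != p1, p1 != p2, p2 != p3 & p3 != p0].
Proof. by case/and4P=> /left_of_neq ? /left_of_neq ? /left_of_neq ? /left_of_neq. Qed.

Lemma turn_sum p0 p1 p2 p3 u :
  turn p0 p1 u + turn p1 p2 u + turn p2 p3 u + turn p3 p0 u
  = turn p0 p1 p2 + turn p2 p3 p0.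
Proof. by rewrite !turnE; ring. Qed.

Lemma convex_ccw_quad_rot p0 p1 p2 p3 :
  convex_ccw_quad p0 p1 p2 p3 -> convex_ccw_quad p1 p2 p3 p0.
Proof. by case/and4P=> *; apply/and4P. Qed.

Lemma convex_quad_opposite_turns_contra p0 p1 p2 p3 u :
  convex_ccw_quad p0 p1 p2 p3 ->
  turn p0 p1 u <= 0 -> turn p2 p3 u <= 0 ->
  0 <= turn p1 p2 u -> 0 <= turn p3 p0 u -> False.
Proof.
case/and4P; rewrite !left_ofE => h012 h123 h230 h301 nA nC pB pD.
(* Each [cert] is a Farkas certificate: a nonnegative combination of the
   assumed signs equal to a positive constant. *)
have [le|lt] := real_leP (turn_real p0 p1 p2) (turn_real p3 p0 p1).
- have cert : turn p1 p2 p3 * turn p0 p1 u + turn p0 p1 p2 * turn p2 p3 u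
              + (turn p3 p0 p1 - turn p0 p1 p2) * - turn p1 p2 u
              = turn p0 p1 p2 * turn p1 p2 p3 by rewrite !turnE; ring.
  have c0 : 0 <= turn p3 p0 p1 - turn p0 p1 p2 by rewrite subr_ge0.
  have nB : - turn p1 p2 u <= 0 by rewrite oppr_le0.
  have := nonneg_comb_le0 (ltW h123) (ltW h012) c0 nA nC nB.
  by rewrite cert lt_geF ?mulr_gt0.
- have cert : turn p2 p3 p0 * turn p0 p1 u + turn p3 p0 p1 * turn p2 p3 u
              + (turn p0 p1 p2 - turn p3 p0 p1) * - turn p3 p0 u
              = turn p3 p0 p1 * turn p2 p3 p0 by rewrite !turnE; ring.
  have c0 : 0 <= turn p0 p1 p2 - turn p3 p0 p1 by rewrite subr_ge0 ltW.
  have nD : - turn p3 p0 u <= 0 by rewrite oppr_le0.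
  have := nonneg_comb_le0 (ltW h230) (ltW h301) c0 nA nC nD.
  by rewrite cert lt_geF ?mulr_gt0.
Qed.

Lemma quad_interior_of_paired_turns p0 p1 p2 p3 u t s :
  convex_ccw_quad p0 p1 p2 p3 -> 0 < t -> 0 < s ->
  turn p0 p1 u = t * turn p2 p3 u -> turn p1 p2 u = s * turn p3 p0 u ->
  in_quad_interior p0 p1 p2 p3 u.
Proof.
move=> Q t0 s0 eA eB; rewrite /in_quad_interior !left_ofE eA eB !pmulr_rgt0 //.
have [nC|pC] := real_leP (turn_real p2 p3 u) (real0 _);
have [nD|pD] := real_leP (turn_real p3 p0 u) (real0 _).
- have nA : turn p0 p1 u <= 0 by rewrite eA pmulr_rle0.
  have nB : turn p1 p2 u <= 0 by rewrite eB pmulr_rle0.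
  move: Q => /and4P[h012 _ h230 _].
  have := lerD (lerD (lerD nA nB) nC) nD.
  by rewrite turn_sum !addr0 lt_geF ?addr_gt0.
- have nA : turn p0 p1 u <= 0 by rewrite eA pmulr_rle0.
  have pB : 0 <= turn p1 p2 u by rewrite eB pmulr_rge0 ?ltW.
  by case: (convex_quad_opposite_turns_contra Q nA nC pB (ltW pD)).
- have pA : 0 <= turn p0 p1 u by rewrite eA pmulr_rge0 ?ltW.
  have nB : turn p1 p2 u <= 0 by rewrite eB pmulr_rle0.
  by case: (convex_quad_opposite_turns_contra (convex_ccw_quad_rot Q) nB nD (ltW pC) pA).
- by [].
Qed.

Lemma turn_pos_scale p q r s u K :
  0 < K -> u != r -> u != s ->
  ((u - p)^* * (u - q)) * ((u - r)^* * (u - s)) = - K ->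
  exists2 t, 0 < t & turn p q u = t * turn r s u.
Proof.
move=> K0 ur us e; set b := (u - r)^* * (u - s) in e.
have b0 : b != 0 by rewrite mulf_neq0 ?conjC_eq0 ?subr_eq0.
exists (K / `|b| ^+ 2); first by rewrite divr_gt0 ?exprn_gt0 ?normr_gt0.
rewrite -!Im_conj_subM -/b.
have -> : (u - p)^* * (u - q) = - K / b by rewrite -e mulfK.
by rewrite ImMl ?rpredN ?gtr0_real // ImV; ring.
Qed.

End Turns.

Lemma quadratic_split (C : numClosedFieldType) (a b c : C) : a != 0 ->
  exists r1 r2 : C,
    a%:P * 'X^2 + b%:P * 'X + c%:P = a *: (('X - r1%:P) * ('X - r2%:P)).
Proof.
move=> a0.
have h2 : (2 : C) != 0 by rewrite pnatr_eq0.
have h4 : (4 : C) != 0 by rewrite pnatr_eq0.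
set s := sqrtC (b ^+ 2 - 4 * a * c).
have hs : s ^+ 2 = b ^+ 2 - 4 * a * c by exact: sqrtCK.
set r1 := (- b - s) / (2 * a); set r2 := (- b + s) / (2 * a).
have e1 : b = - a * (r1 + r2) by rewrite /r1 /r2; field.
have e2 : c = a * (r1 * r2).
  rewrite /r1 /r2 [RHS](_ : _ = (b ^+ 2 - s ^+ 2) / (4 * a)); last by field.
  by rewrite hs; field.
exists r1, r2; clearbody r1 r2.
by rewrite e1 e2 -mul_polyC !(polyCM, polyCN, polyCD); ring.
Qed.

Section QuadEqPoly.
Variables (C : numClosedFieldType) (z w X : C).

Lemma quad_eq_polyE : quad_eq_poly z w X =
  (- (1 + X))%:P * 'X^2 + (1 + w + X * z)%:P * 'X + (- w)%:P.
Proof. by rewrite /quad_eq_poly !(polyCD, polyCN, polyCM, polyC1); ring. Qed.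

Lemma horner_quad_eq_poly u :
  (quad_eq_poly z w X).[u] = - ((u - 1) * (u - w) + X * (u * (u - z))).
Proof. by rewrite /quad_eq_poly !(hornerD, hornerN, hornerM, hornerC, hornerX); ring. Qed.

Lemma root_quad_eq_poly u :
  root (quad_eq_poly z w X) u = ((u - 1) * (u - w) == - (X * (u * (u - z)))).
Proof. by rewrite /root horner_quad_eq_poly oppr_eq0 addr_eq0. Qed.

Lemma cross_ratio_lhs_eq u : (0 - u) * (z - u) != 0 ->
  (cross_ratio_lhs z w u == X) = root (quad_eq_poly z w X) u.
Proof.
move=> D0; rewrite root_quad_eq_poly /cross_ratio_lhs.
have eD : u * (u - z) = (0 - u) * (z - u) by ring.
have eN : - ((1 - u) * (w - u)) = - ((u - 1) * (u - w)) by ring.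
rewrite eD eN; apply/eqP/eqP => [<- | ->]; first by rewrite divfK ?opprK.
by rewrite opprK mulfK.
Qed.

Lemma root_quad_eq_poly_neq u : X != 0 -> 1 != z -> z != w -> w != 0 ->
  root (quad_eq_poly z w X) u -> [/\ u != 0, u != z & u != w].
Proof.
move=> X0 z1 zw w0; rewrite root_quad_eq_poly => /eqP e; split.
- apply: contra_neq w0 => u0; move: e.
  by rewrite u0 !(sub0r, mul0r, mulr0, oppr0) mulN1r opprK.
- apply: contra_neq z1 => uz; move: e; rewrite uz subrr !(mulr0, oppr0) => /eqP.
  by rewrite mulf_eq0 !subr_eq0 (negbTE zw) orbF eq_sym => /eqP.
- apply: contra_neq zw => uw; move: e; rewrite uw subrr mulr0 => /eqP.
  by rewrite eq_sym oppr_eq0 !mulf_eq0 (negbTE X0) (negbTE w0) subr_eq0 => /eqP.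
Qed.

Lemma root_quad_eq_poly_interior u :
  convex_ccw_quad 0 1 z w -> 0 < X ->
  root (quad_eq_poly z w X) u -> in_quad_interior 0 1 z w u.
Proof.
move=> Q X0 ru; have [_ z1 zw w0] := convex_ccw_quad_neq Q.
have [u0 uz uw] := root_quad_eq_poly_neq (lt0r_neq0 X0) z1 zw w0 ru.
move: ru; rewrite root_quad_eq_poly => /eqP e.
set K := X * `|u * (u - z)| ^+ 2.
have K0 : 0 < K by rewrite mulr_gt0 ?exprn_gt0 ?normr_gt0 ?mulf_neq0 ?subr_eq0.
have e1 : ((u - 0)^* * (u - 1)) * ((u - z)^* * (u - w)) = - K.
  transitivity ((u * (u - z))^* * ((u - 1) * (u - w))); first by rewrite rmorphM subr0; ring.
  by rewrite e /K normCKC; ring.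
have e2 : ((u - 1)^* * (u - z)) * ((u - w)^* * (u - 0)) = - K.
  transitivity (((u - 1) * (u - w))^* * (u * (u - z))); first by rewrite rmorphM subr0; ring.
  by rewrite e rmorphN rmorphM /= conj_Creal ?gtr0_real // /K normCKC; ring.
have [t t0 eA] := turn_pos_scale K0 uz uw e1.
have [s s0 eB] := turn_pos_scale K0 uw u0 e2.
exact: quad_interior_of_paired_turns Q t0 s0 eA eB.
Qed.

End QuadEqPoly.

Theorem mainTheorem2 (C : numClosedFieldType) (z w X : C) :
  convex_ccw_quad 0 1 z w -> 0 < X ->
  exists u1 u2 : C,
    [/\ exists2 c : C, c != 0 & quad_eq_poly z w X = c *: (('X - u1%:P) * ('X - u2%:P)),
        (forall u : C, ((0 - u) * (z - u) != 0 /\ cross_ratio_lhs z w u = X)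
                        <-> (u = u1 \/ u = u2)),
        in_quad_interior 0 1 z w u1
      & in_quad_interior 0 1 z w u2].
Proof.
move=> Q X0; have [_ z1 zw w0] := convex_ccw_quad_neq Q.
have a0 : - (1 + X) != 0 by rewrite oppr_eq0 gt_eqF // addr_gt0 ?ltr01.
have [r1 [r2 r12]] := quadratic_split (1 + w + X * z) (- w) a0.
have rootE u : root (quad_eq_poly z w X) u = (u == r1) || (u == r2).
  by rewrite quad_eq_polyE r12 rootZ // rootM !root_XsubC.
have interior u : (u == r1) || (u == r2) -> in_quad_interior 0 1 z w u.
  by rewrite -rootE; exact: root_quad_eq_poly_interior.
exists r1, r2; split; first by exists (- (1 + X)); rewrite // quad_eq_polyE r12.
- move=> u; split=> [[D0 /eqP] | r12u].
    by rewrite cross_ratio_lhs_eq // rootE => /orP[] /eqP; [left | right].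
  have ru : root (quad_eq_poly z w X) u.
    by rewrite rootE; case: r12u => ->; rewrite eqxx ?orbT.
  have [u0 uz _] := root_quad_eq_poly_neq (lt0r_neq0 X0) z1 zw w0 ru.
  have D0 : (0 - u) * (z - u) != 0 by rewrite mulf_neq0 // subr_eq0 // eq_sym.
  by split; last by apply/eqP; rewrite cross_ratio_lhs_eq.
- by apply: interior; rewrite eqxx.
- by apply: interior; rewrite eqxx orbT.
Qed.
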